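(* Let $\tau\in\mathcal A_n$ be a permutation that is not simple. Then there exist $m$ with $2\le m\le n-1$, a simple permutation $\pi\in\mathcal A_m$, and $\sigma\in\mathcal A_{n-m+1}$ such that $\tau=\pi[\sigma]$; moreover the simple permutation $\pi$ is uniquely determined by $\tau$.
   Context: $\mathcal A_{n}$ is the set of permutations $w\in S_{n}$ (one-line notation $w_1\cdots w_n$) avoiding all six vincular patterns below, where $w$ contains - $\underline{32}\,\underline{41}$ if there are $i,j$ with $i+2\le j\le n-1$ and $w_{j+1}<w_{i+1}<w_i<w_j$; - $\underline{14}\,\underline{23}$ if there are such $i,j$ with $w_i<w_j<w_{j+1}<w_{i+1}$; - $\underline{41}\,\underline{32}$ if there are such $i,j$ with $w_{i+1}<w_{j+1}<w_j<w_i$; - $\underline{23}\,\underline{14}$ if there are such $i,j$ with $w_j<w_i<w_{i+1}<w_{j+1}$; - $\underline{23}\,\underline{1}$ if there is $i$ with $i+1\le n-1$ and $w_n<w_i<w_{i+1}$; - $\underline{1}\,\underline{32}$ if there is $j$ with $2\le j\le n-1$ and $w_1<w_{j+1}<w_j$. A permutation $\pi\in S_n$ is simple if there is no interval of positions $\{i,i+1,\dots,j\}$ with $2\le j-i+1\le n-1$ such that $\{\pi_i,\dots,\pi_j\}$ is a set of consecutive integers (so every permutation of length $\le2$ is simple). Inflation at $1$: for $\pi\in S_n$ with $\pi_r=1$ and $\sigma\in S_m$, $\pi[\sigma]=(\pi_1+m-1)\cdots(\pi_{r-1}+m-1)\,\sigma_1\cdots\sigma_m\,(\pi_{r+1}+m-1)\cdots(\pi_n+m-1)\in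 S_{n+m-1}$. *)

From mathcomp Require Import all_boot.
Set Implicit Arguments. Unset Strict Implicit. Unset Printing Implicit Defensive.

Definition is_perm (n : nat) (w : seq nat) : Prop := perm_eq w (iota 1 n).

(* 1-based access: w_i *)
Definition ent (w : seq nat) (i : nat) : nat := nth 0 w i.-1.

Definition contains_3241 (w : seq nat) : Prop :=
  exists i j, [/\ 1 <= i, i + 2 <= j, j <= (size w).-1 &
    [/\ ent w j.+1 < ent w i.+1, ent w i.+1 < ent w i & ent w i < ent w j]].
Definition contains_1423 (w : seq nat) : Prop :=
  exists i j, [/\ 1 <= i, i + 2 <= j, j <= (size w).-1 &
    [/\ ent w i < ent w j, ent w j < ent w j.+1 & ent w j.+1 < ent w i.+1]].
Definition contains_4132 (w : seq nat) : Prop :=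
  exists i j, [/\ 1 <= i, i + 2 <= j, j <= (size w).-1 &
    [/\ ent w i.+1 < ent w j.+1, ent w j.+1 < ent w j & ent w j < ent w i]].
Definition contains_2314 (w : seq nat) : Prop :=
  exists i j, [/\ 1 <= i, i + 2 <= j, j <= (size w).-1 &
    [/\ ent w j < ent w i, ent w i < ent w i.+1 & ent w i.+1 < ent w j.+1]].
Definition contains_231 (w : seq nat) : Prop :=
  exists i, [/\ 1 <= i, i.+1 <= (size w).-1,
    ent w (size w) < ent w i & ent w i < ent w i.+1].
Definition contains_132 (w : seq nat) : Prop :=
  exists j, [/\ 2 <= j, j <= (size w).-1,
    ent w 1 < ent w j.+1 & ent w j.+1 < ent w j].

Definition inA (n : nat) (w : seq nat) : Prop :=
  is_perm n w /\
  [/\ ~ contains_3241 w, ~ contains_1423 w, ~ contains_4132 w,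
      ~ contains_2314 w & (~ contains_231 w /\ ~ contains_132 w)].

Definition consecutive_block (w : seq nat) (i j : nat) : Prop :=
  exists a, perm_eq (take (j - i + 1) (drop i.-1 w)) (iota a (j - i + 1)).

Definition simple (w : seq nat) : Prop :=
  forall i j, 1 <= i -> i <= j -> j <= size w ->
    2 <= j - i + 1 -> j - i + 1 <= (size w).-1 -> ~ consecutive_block w i j.

(* inflation of pi at its entry 1 by sigma *)
Definition inflate (pi sigma : seq nat) : seq nat :=
  let r := index 1 pi in
  [seq x + (size sigma).-1 | x <- take r pi] ++ sigma ++
  [seq x + (size sigma).-1 | x <- drop r.+1 pi].

(* Call a run of positions carrying the values 1, ..., l a low block.  In a
   permutation of A_n every proper interval of length at least 2 yields a
   proper low block: if its values miss 1, the avoided patterns make the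
   interval monotone and the entries between it and the 1 small, so that the
   interval together with them, or else the prefix ending with the interval's
   first entry, is a low block.  The 1 lying to the right is the mirror case,
   as reversal permutes the six patterns.  Collapsing a longest proper low
   block of tau to a single entry 1 writes tau = pi[sigma].  Then pi is
   simple, since a proper low block of pi through that 1 would lift to a
   longer one of tau; and pi is unique, since the block of another
   decomposition pi'[sigma'] is a low block of tau inside the longest one,
   which, if longer, would collapse to a proper interval of pi'. *)

From mathcomp Require Import all_boot zify.
From Stdlib Require Import Classical.
Set Implicit Arguments. Unset Strict Implicit. Unset Printing Implicit Defensive.

Section PermEntries.
Variables (n : nat) (w : seq nat).
Hypothesis w_perm : is_perm n w.

Lemma is_perm_size : size w = n.
Proof. by rewrite (perm_size w_perm) size_iota. Qed.

Lemma is_perm_uniq : uniq w.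
Proof. by rewrite (perm_uniq w_perm) iota_uniq. Qed.

Lemma ent_range x : 1 <= x <= n -> 1 <= ent w x <= n.
Proof.
move=> hx; have : ent w x \in w by rewrite /ent mem_nth // is_perm_size; lia.
by rewrite (perm_mem w_perm) mem_iota; lia.
Qed.

Lemma ent_inj x y : 1 <= x <= n -> 1 <= y <= n -> ent w x = ent w y -> x = y.
Proof.
move=> hx hy /eqP; rewrite /ent nth_uniq ?is_perm_size ?is_perm_uniq; lia.
Qed.

Lemma ent_onto v : 1 <= v <= n -> exists2 x, 1 <= x <= n & ent w x = v.
Proof.
move=> hv; have hin : v \in w by rewrite (perm_mem w_perm) mem_iota; lia.
exists (index v w).+1; last by rewrite /ent nth_index.
by move: hin; rewrite -index_mem is_perm_size; lia.
Qed.

End PermEntries.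

Definition segment (w : seq nat) (q l : nat) := take l (drop q.-1 w).

Lemma segmentE w q l : 1 <= q -> q.-1 + l <= size w ->
  segment w q l = map (ent w) (iota q l).
Proof.
move=> hq hl; apply: (@eq_from_nth _ 0) => [|i].
  by rewrite size_takel ?size_drop ?size_map ?size_iota //; lia.
rewrite size_takel ?size_drop => [hi|]; last lia.
rewrite nth_take // nth_drop (nth_map 0) ?size_iota // nth_iota //.
by rewrite /ent; congr nth; lia.
Qed.

Lemma is_perm_of_ent n w : size w = n ->
  (forall x, 1 <= x <= n -> 1 <= ent w x <= n) ->
  (forall x y, 1 <= x <= n -> 1 <= y <= n -> ent w x = ent w y -> x = y) ->
  is_perm n w.
Proof.
move=> hs hr hi.
have hw : w = map (ent w) (iota 1 n).
  by rewrite -segmentE ?hs // /segment drop0 take_oversize ?hs.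
have hu : uniq w.
  rewrite hw map_inj_in_uniq ?iota_uniq // => x y; rewrite !mem_iota => hx hy.
  by apply: hi; lia.
have hsub : {subset w <= iota 1 n}.
  by move=> v; rewrite hw => /mapP [x]; rewrite !mem_iota => /hr + ->; lia.
have [_ he] := uniq_min_size hu hsub (eq_leq (etrans (size_iota _ _) (esym hs))).
exact: uniq_perm hu (iota_uniq 1 n) he.
Qed.

Definition block_values (w : seq nat) (q l a : nat) :=
  forall x, q <= x < q + l -> a <= ent w x < a + l.

Definition low_block (w : seq nat) (q l : nat) :=
  [/\ 1 <= q, q + l <= (size w).+1 & block_values w q l 1].

Section BlockValues.
Variables (n : nat) (w : seq nat) (q l a : nat).
Hypotheses (w_perm : is_perm n w) (q_ge1 : 1 <= q) (ql_le : q + l <= n.+1).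
Hypothesis w_block : block_values w q l a.

Lemma block_values_fill : map (ent w) (iota q l) =i iota a l.
Proof.
have hu : uniq (map (ent w) (iota q l)).
  rewrite map_inj_in_uniq ?iota_uniq // => x y; rewrite !mem_iota => hx hy.
  by apply: (ent_inj w_perm); lia.
have hsub : {subset map (ent w) (iota q l) <= iota a l}.
  by move=> u /mapP [x]; rewrite !mem_iota => /w_block + ->.
have hsz : size (iota a l) <= size (map (ent w) (iota q l)).
  by rewrite size_map !size_iota.
by have [] := uniq_min_size hu hsub hsz.
Qed.

Lemma block_values_position z :
  1 <= z <= n -> a <= ent w z < a + l -> q <= z < q + l.
Proof.
move=> hz hvz; have := block_values_fill (ent w z); rewrite mem_iota hvz.
by move=> /mapP [x]; rewrite mem_iota => hx /(ent_inj w_perm) -> //; lia.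
Qed.

Lemma block_values_bound : 1 <= l -> a + l <= n.+1.
Proof.
move=> hl; have := block_values_fill (a + l).-1; rewrite mem_iota.
have -> : a <= (a + l).-1 < a + l by lia.
case/mapP => x; rewrite mem_iota => hx hxv.
by have := ent_range w_perm (x := x); lia.
Qed.

Lemma consecutive_block_of_values : 1 <= l -> consecutive_block w q (q + l - 1).
Proof.
move=> hl; exists a; have -> : q + l - 1 - q + 1 = l by lia.
have hseg : segment w q l = map (ent w) (iota q l).
  by apply: segmentE; rewrite ?(is_perm_size w_perm); lia.
rewrite -/(segment w q l) hseg; apply: uniq_perm; last exact: block_values_fill.
  rewrite map_inj_in_uniq ?iota_uniq // => x y; rewrite !mem_iota => hx hy.
  by apply: (ent_inj w_perm); lia.
by rewrite iota_uniq.
Qed.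

End BlockValues.

Lemma consecutive_block_values n w i j : is_perm n w -> 1 <= i <= j -> j <= n ->
  consecutive_block w i j -> exists a, block_values w i (j - i + 1) a.
Proof.
move=> hp hij hj [a ha]; exists a => x hx.
rewrite -/(segment w i _) segmentE ?(is_perm_size hp) in ha; try lia.
by rewrite -mem_iota -(perm_mem ha) map_f // mem_iota.
Qed.

Section LowBlock.
Variables (n : nat) (w : seq nat).
Hypothesis w_perm : is_perm n w.

Lemma low_block_position q l z : low_block w q l ->
  1 <= z <= n -> ent w z <= l -> q <= z < q + l.
Proof.
move=> [hq hql hv] hz hvz; rewrite (is_perm_size w_perm) in hql.
apply: (block_values_position w_perm hq hql hv hz).
by have := ent_range w_perm hz; lia.
Qed.

Lemma low_block_consecutive q l : 1 <= l -> low_block w q l ->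
  consecutive_block w q (q + l - 1).
Proof.
move=> hl.
case=> hq hql hv; rewrite (is_perm_size w_perm) in hql.
exact: (consecutive_block_of_values w_perm hq hql hv hl).
Qed.

Lemma low_block_of_threshold q l v : 1 <= q -> q + l <= n.+1 -> v <= n ->
  (forall x, q <= x < q + l -> ent w x <= v) ->
  (forall z, 1 <= z <= n -> z < q \/ q + l <= z -> v < ent w z) ->
  low_block w q l.
Proof.
move=> hq hql hvn hin hout.
have hvl : v <= l.
  have := uniq_leq_size (iota_uniq 1 v) (s2 := map (ent w) (iota q l)).
  rewrite size_map !size_iota; apply=> u; rewrite mem_iota => hu.
  have [z hz hzu] := ent_onto w_perm (v := u) ltac:(lia).
  rewrite -hzu map_f // mem_iota.
  case: (ltnP z q) => hzq; first by have := hout z hz (or_introl hzq); lia.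
  by case: (ltnP z (q + l)) => hzl //; have := hout z hz (or_intror hzl); lia.
split => //; first by rewrite (is_perm_size w_perm).
by move=> x hx; have := hin x hx; have := ent_range w_perm (x := x); lia.
Qed.

End LowBlock.

Definition avoids_all (w : seq nat) :=
  [/\ ~ contains_3241 w, ~ contains_1423 w, ~ contains_4132 w,
      ~ contains_2314 w & (~ contains_231 w /\ ~ contains_132 w)].

Section Reversal.
Variable w : seq nat.
Local Notation n := (size w).

Lemma ent_rev x : 1 <= x <= n -> ent (rev w) x = ent w (n - x).+1.
Proof. by move=> hx; rewrite /ent nth_rev; [congr nth; lia | lia]. Qed.

Lemma ent_revS x : x < n -> ent (rev w) x.+1 = ent w (n - x).
Proof. by move=> hx; rewrite ent_rev; [congr ent; lia | lia]. Qed.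

Lemma contains4_rev :
  [/\ contains_3241 (rev w) -> contains_1423 w, contains_1423 (rev w) -> contains_3241 w,
      contains_4132 (rev w) -> contains_2314 w & contains_2314 (rev w) -> contains_4132 w].
Proof.
split; case=> i [j []]; rewrite size_rev => hi hij hj; rewrite !ent_revS ?ent_rev; try lia;
  by case=> *; exists (n - j), (n - i); do !split; lia.
Qed.

Lemma contains_231_rev : contains_231 (rev w) -> contains_132 w.
Proof.
case=> i []; rewrite size_rev => hi hin.
rewrite ent_revS ?ent_rev ?subnn; try lia.
by move=> *; exists (n - i); do !split; lia.
Qed.

Lemma contains_132_rev : contains_132 (rev w) -> contains_231 w.
Proof.
case=> j []; rewrite size_rev => hj hjn.
rewrite (ent_revS (x := 0)) ?(ent_revS (x := j)) ?(ent_rev (x := j)) ?subn0; try lia.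
by move=> *; exists (n - j); do !split; lia.
Qed.

Lemma avoids_all_rev : avoids_all w -> avoids_all (rev w).
Proof.
case=> h3241 h1423 h4132 h2314 [h231 h132]; have [r3241 r1423 r4132 r2314] := contains4_rev.
by split; [move/r3241 | move/r1423 | move/r4132 | move/r2314
  | split; [move/contains_231_rev | move/contains_132_rev]].
Qed.

Lemma is_perm_rev k : is_perm k w -> is_perm k (rev w).
Proof. by rewrite /is_perm perm_rev. Qed.

Lemma block_values_rev q l a : 1 <= q -> q + l <= n.+1 ->
  block_values w q l a -> block_values (rev w) (n.+2 - (q + l)) l a.
Proof.
move=> hq hql hv x hx; rewrite ent_rev; last lia.
by apply: hv; lia.
Qed.

End Reversal.

Lemma low_block_rev w q l :
  low_block (rev w) q l -> low_block w ((size w).+2 - (q + l)) l.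
Proof.
case; rewrite size_rev => hq hql hv; split; try lia.
by rewrite -[w]revK size_rev; apply: block_values_rev; rewrite ?size_rev.
Qed.

Lemma exists_switch (P : pred nat) x y : x <= y -> P x -> ~~ P y ->
  exists2 q, x <= q < y & P q && ~~ P q.+1.
Proof.
move=> + Px; elim: y => [|y IH] hxy nPy.
  by move: Px; rewrite (_ : x = 0) ?(negbTE nPy) //; lia.
case: (ltnP y x) => [hyx|hxy']; first by move: Px; rewrite (_ : x = y.+1) ?(negbTE nPy) //; lia.
case: (boolP (P y)) => Py; first by exists y; rewrite ?Py //; lia.
by have [q hq Pq] := IH hxy' Py; exists q => //; lia.
Qed.

(* An interval of positions [s, s + l) carrying the values [a, a + l), with a
   smaller entry to its left.  Avoiding 4132 and 132 makes the interval
   increasing; then 231 and 2314 push every later entry above it, and 1423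
   makes the small entries before it a run ending just before s. *)
Section SmallEntryLeft.
Variables (n : nat) (w : seq nat) (s l a r : nat).
Hypotheses (w_perm : is_perm n w) (w_avoids : avoids_all w).
Hypotheses (l_ge2 : 2 <= l) (sl_le : s + l <= n.+1) (w_block : block_values w s l a).
Hypotheses (r_ge1 : 1 <= r) (r_lt : r < s) (r_low : ent w r < a).

Let w_size : size w = n := is_perm_size w_perm.
Let s_pos : 0 < s := ltnW (leq_ltn_trans r_ge1 r_lt).

Lemma outside_block z : 1 <= z <= n -> z < s \/ s + l <= z ->
  ent w z < a \/ a + l <= ent w z.
Proof.
move=> hz hzo; case: (ltnP (ent w z) a) => [|hza]; first by left.
case: (ltnP (ent w z) (a + l)) => [hzl|]; last by right.
by have := block_values_position w_perm s_pos sl_le w_block hz; lia.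
Qed.

Lemma block_increasing t : s <= t -> t.+1 < s + l -> ent w t < ent w t.+1.
Proof.
move=> hst hts; case: (ltngtP (ent w t) (ent w t.+1)) => // [hdesc|heq]; last first.
  by have := ent_inj w_perm (x := t) (y := t.+1); lia.
exfalso; have [_ _ h4132 _ [_ h132]] := w_avoids.
have hbt : a <= ent w t < a + l by apply: w_block; lia.
have hbt1 : a <= ent w t.+1 < a + l by apply: w_block; lia.
have high1 : a + l <= ent w 1.
  have : ent w t.+1 < ent w 1.
    case: (ltngtP (ent w t.+1) (ent w 1)) => // h.
      by case: h132; exists t; rewrite w_size; do !split; lia.
    by have := ent_inj w_perm (x := t.+1) (y := 1); lia.
  by case: (outside_block (z := 1) ltac:(lia) ltac:(lia)); lia.
have [q hq /andP [hiq]] := exists_switch (P := fun z => a + l <= ent w z) (x := 1) (y := r)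
  ltac:(lia) high1 ltac:(rewrite -ltnNge; lia).
rewrite -ltnNge => hq1; have low_q1 : ent w q.+1 < a.
  by case: (outside_block (z := q.+1) ltac:(lia) ltac:(lia)); lia.
by apply: h4132; exists q, t; rewrite w_size; do !split; lia.
Qed.

Lemma block_start_least x : s < x < s + l -> ent w s < ent w x.
Proof.
elim: x => [|x IH] hx; first lia.
have := block_increasing (t := x) ltac:(lia) ltac:(lia).
by case: (ltnP s x) => hsx; [have := IH ltac:(lia) | have -> : s = x by lia]; lia.
Qed.

Lemma high_after_block z : s + l <= z <= n -> a + l <= ent w z.
Proof.
move=> hz; have [_ _ _ h2314 [h231 _]] := w_avoids.
have hs : a <= ent w s < a + l by apply: w_block; lia.
have hs1 := block_increasing (t := s) ltac:(lia) ltac:(lia).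
have hs1v : a <= ent w s.+1 < a + l by apply: w_block; lia.
have high_n : a + l <= ent w n.
  case: (outside_block (z := n) ltac:(lia) ltac:(lia)) => // hlo.
  by case: h231; exists s; rewrite w_size; do !split; lia.
case: (outside_block (z := z) ltac:(lia) ltac:(lia)) => // hlo; exfalso.
have [q hq /andP [hlq]] := exists_switch (P := fun z => ent w z < a) (x := z) (y := n)
  ltac:(lia) hlo ltac:(rewrite -leqNgt; lia).
rewrite -leqNgt => hq1.
have high_q1 : a + l <= ent w q.+1.
  by case: (outside_block (z := q.+1) ltac:(lia) ltac:(lia)); lia.
by apply: h2314; exists s, q; rewrite w_size; do !split; lia.
Qed.

Lemma low_before_block x y : 1 <= x <= y -> y < s -> ent w x < a -> ent w y < a.
Proof.
move=> hxy hys hlo; have [_ h1423 _ _ _] := w_avoids.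
case: (outside_block (z := y) ltac:(lia) ltac:(lia)) => // hhi; exfalso.
have hs : a <= ent w s < a + l by apply: w_block; lia.
have hs1 := block_increasing (t := s) ltac:(lia) ltac:(lia).
have hs1v : a <= ent w s.+1 < a + l by apply: w_block; lia.
have [q hq /andP [hlq]] := exists_switch (P := fun z => ent w z < a) (x := x) (y := y)
  ltac:(lia) hlo ltac:(rewrite -leqNgt; lia).
rewrite -leqNgt => hq1.
have high_q1 : a + l <= ent w q.+1.
  by case: (outside_block (z := q.+1) ltac:(lia) ltac:(lia)); lia.
by apply: h1423; exists q, s; rewrite w_size; do !split; lia.
Qed.

Lemma exists_low_block_small_left : exists q k, 2 <= k <= n.-1 /\ low_block w q k.
Proof.
have ubound := block_values_bound w_perm s_pos sl_le w_block (ltnW l_ge2).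
have hr : (0 < r) && (ent w r < a) by rewrite r_ge1 r_low.
case: (ex_minnP (ex_intro (fun z => (0 < z) && (ent w z < a)) r hr)) => q0.
move=> /andP [hq0 hq0a] hq0min; have hq0r := hq0min r hr.
have low_left x : q0 <= x < s -> ent w x < a.
  by move=> hx; apply: (low_before_block (x := q0)); lia.
have block0 : low_block w q0 (s + l - q0).
  apply: (low_block_of_threshold w_perm (v := (a + l).-1)); try lia.
    move=> x hx; case: (ltnP x s) => hxs; first by have := low_left x; lia.
    have hxv : a <= ent w x < a + l by apply: w_block; lia.
    lia.
  move=> z hz [hzq|hzs]; last by have := high_after_block (z := z); lia.
  have : ~~ ((0 < z) && (ent w z < a)) by apply/negP => /hq0min; lia.
  by rewrite negb_and -leqNgt; case: (outside_block (z := z) ltac:(lia) ltac:(lia)); lia.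
case: (leqP (s + l - q0) n.-1) => hlen; first by exists q0, (s + l - q0); split => //; lia.
have [q0_1 sl_n] : q0 = 1 /\ s + l = n.+1 by lia.
have start_a : ent w s = a.
  have [z hz hza] := ent_onto w_perm (v := a) ltac:(lia).
  have hzb := block_values_position w_perm s_pos sl_le w_block hz.
  have hsv : a <= ent w s < a + l by apply: w_block; lia.
  case: (ltnP s z) => hsz; first by have := block_start_least (x := z); lia.
  by have -> : s = z by lia.
have block1 : low_block w 1 s.
  apply: (low_block_of_threshold w_perm (v := a)); try lia.
    move=> x hx; case: (ltnP x s) => hxs; first by have := low_left x; lia.
    by rewrite (_ : x = s); lia.
  move=> z hz [|hzs]; first lia.
  case: (ltnP z (s + l)) => hzl; first by have := block_start_least (x := z); lia.
  by have := high_after_block (z := z); lia.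
by exists 1, s; split => //; lia.
Qed.

End SmallEntryLeft.

Lemma exists_low_block n w i j : is_perm n w -> avoids_all w -> 1 <= i < j -> j <= n ->
  j - i + 1 <= n.-1 -> consecutive_block w i j ->
  exists q k, 2 <= k <= n.-1 /\ low_block w q k.
Proof.
move=> hp hav hij hjn hlen hcb; have hsize := is_perm_size hp.
have [a hv] := consecutive_block_values (i := i) (j := j) hp ltac:(lia) hjn hcb.
move: hv hlen; set l := j - i + 1 => hv hlen.
have hil : i + l <= n.+1 by lia.
case: (leqP a 1) => [ha|ha].
  exists i, l; split; first lia; split; rewrite ?hsize //; first lia.
  by move=> x hx; have := hv x hx; have := ent_range hp (x := x); lia.
have [r hr hr1] := ent_onto hp (v := 1) ltac:(lia).
have [hri|hri] : r < i \/ i + l <= r.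
  by case: (ltnP r i) => hri; [left | right; have := hv r; lia].
  by apply: (exists_low_block_small_left hp hav _ hil hv (r := r)); lia.
have rev_block : block_values (rev w) (n.+2 - (i + l)) l a.
  by rewrite -hsize; apply: (block_values_rev _ _ hv); rewrite ?hsize; lia.
have rev_r : ent (rev w) (n.+1 - r) < a.
  by rewrite ent_rev hsize; [rewrite (_ : (n - (n.+1 - r)).+1 = r) | ]; lia.
have [q [k [hk hlow]]] := exists_low_block_small_left (is_perm_rev hp) (avoids_all_rev hav)
  (s := n.+2 - (i + l)) (l := l) (r := n.+1 - r) ltac:(lia) ltac:(lia) rev_block
  ltac:(lia) ltac:(lia) rev_r.
by exists ((size w).+2 - (q + k)), k; split => //; apply: low_block_rev.
Qed.

Definition deflate_pos (p k x : nat) := if x < p then x else x + k.-1.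

(* The block of length k at position p is collapsed onto its last entry: the
   values above the block drop by k - 1 and the block's value (at most k)
   becomes 1. *)
Definition deflate (t : seq nat) (p k : nat) :=
  [seq maxn 1 (ent t (deflate_pos p k x) - k.-1) | x <- iota 1 (size t - k.-1)].

Lemma ent_map_iota (f : nat -> nat) m x : 1 <= x <= m -> ent (map f (iota 1 m)) x = f x.
Proof.
move=> hx; rewrite /ent (nth_map 0) ?size_iota; last lia.
by rewrite nth_iota; [congr f; lia | lia].
Qed.

Lemma size_deflate t p k : size (deflate t p k) = size t - k.-1.
Proof. by rewrite size_map size_iota. Qed.

Lemma ent_deflate t p k x : 1 <= x <= size t - k.-1 ->
  ent (deflate t p k) x = maxn 1 (ent t (deflate_pos p k x) - k.-1).
Proof. exact: ent_map_iota. Qed.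

Lemma deflate_pos_ge p k x : x <= deflate_pos p k x.
Proof. by rewrite /deflate_pos; case: (ltnP x p); lia. Qed.

Lemma deflate_pos_gap p k x y : x + 2 <= y -> deflate_pos p k x + 2 <= deflate_pos p k y.
Proof. by rewrite /deflate_pos; case: (ltnP x p); case: (ltnP y p); lia. Qed.

Lemma deflate_pos_succ p k x : (deflate_pos p k x).+1 <= deflate_pos p k x.+1.
Proof. by rewrite /deflate_pos; case: (ltnP x p); case: (ltnP x.+1 p); lia. Qed.

Section Deflate.
Variables (n : nat) (t : seq nat) (p k : nat).
Hypotheses (t_perm : is_perm n t) (t_low : low_block t p k) (k_pos : 0 < k).
Local Notation m := (n - k.-1).
Local Notation pi := (deflate t p k).

Let t_size : size t = n := is_perm_size t_perm.

Lemma low_block_bounds : 1 <= p /\ p + k <= n.+1.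
Proof. by case: t_low; rewrite t_size. Qed.

Lemma low_block_below x : p <= x < p + k -> ent t x <= k.
Proof. by case: t_low => _ _ /(_ x) hv /hv; lia. Qed.

Lemma low_block_above z : 1 <= z <= n -> z < p \/ p + k <= z -> k < ent t z.
Proof.
move=> hz hzo; case: (ltnP k (ent t z)) => // hle.
by have := low_block_position t_perm t_low hz hle; lia.
Qed.

Lemma deflate_pos_range x : 1 <= x <= m -> 1 <= deflate_pos p k x <= n.
Proof. by move=> hx; have := low_block_bounds; rewrite /deflate_pos; case: (ltnP x p); lia. Qed.

Lemma ent_deflate_p : ent pi p = 1.
Proof.
have [hp hpk] := low_block_bounds.
rewrite ent_deflate; last by rewrite t_size; lia.
by rewrite /deflate_pos ltnn; have := low_block_below (x := p + k.-1); lia.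
Qed.

Lemma above_deflate_pos x : 1 <= x <= m -> x != p -> k < ent t (deflate_pos p k x).
Proof.
move=> hx hxp; have [hp hpk] := low_block_bounds.
apply: low_block_above; first exact: deflate_pos_range.
by rewrite /deflate_pos; case: (ltnP x p); lia.
Qed.

Lemma ent_deflate_off x : 1 <= x <= m -> x != p ->
  ent pi x + k.-1 = ent t (deflate_pos p k x).
Proof.
move=> hx hxp; rewrite ent_deflate ?t_size //.
by have := above_deflate_pos hx hxp; lia.
Qed.

Lemma deflate_pos_lt x : x < m -> deflate_pos p k x < n.
Proof. by have := low_block_bounds; rewrite /deflate_pos; case: (ltnP x p); lia. Qed.

Lemma ent_deflateS x : 1 <= x -> x < m ->
  ent pi x.+1 = maxn 1 (ent t (deflate_pos p k x).+1 - k.-1).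
Proof.
move=> hx hxm; have [hp hpk] := low_block_bounds.
rewrite ent_deflate ?t_size; last lia.
case: (eqVneq x.+1 p) => [hxp|hxp].
  rewrite /deflate_pos ifF ?ifT; try lia.
  by have := low_block_below (x := x.+1 + k.-1); have := low_block_below (x := x.+1); lia.
by congr (maxn 1 (ent t _ - _)); rewrite /deflate_pos; case: (ltnP x p); case: (ltnP x.+1 p); lia.
Qed.

Lemma ent_deflate_first : 1 <= m -> ent pi 1 = maxn 1 (ent t 1 - k.-1).
Proof.
move=> hm; have [hp hpk] := low_block_bounds.
rewrite ent_deflate ?t_size; last lia.
rewrite /deflate_pos; case: (ltnP 1 p) => // hp1.
by have := low_block_below (x := 1 + k.-1); have := low_block_below (x := 1); lia.
Qed.

Lemma ent_deflate_last : 1 <= m -> ent pi m = maxn 1 (ent t n - k.-1).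
Proof.
move=> hm; have [hp hpk] := low_block_bounds.
rewrite ent_deflate ?t_size; last lia.
by rewrite /deflate_pos ifF; [congr (maxn 1 (ent t _ - _)); lia | apply/negbTE; lia].
Qed.

Lemma is_perm_deflate : is_perm m pi.
Proof.
have [hp hpk] := low_block_bounds.
apply: is_perm_of_ent; first by rewrite size_deflate t_size.
  move=> x hx; case: (eqVneq x p) => [->|hxp]; first by rewrite ent_deflate_p; lia.
  have := ent_deflate_off hx hxp; have := above_deflate_pos hx hxp.
  by have := ent_range t_perm (deflate_pos_range hx); lia.
move=> x y hx hy; case: (eqVneq x p) => [->|hxp]; case: (eqVneq y p) => [->|hyp] //.
- by rewrite ent_deflate_p; have := ent_deflate_off hy hyp; have := above_deflate_pos hy hyp; lia.
- by rewrite ent_deflate_p; have := ent_deflate_off hx hxp; have := above_deflate_pos hx hxp; lia.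
move=> heq; have : ent t (deflate_pos p k x) = ent t (deflate_pos p k y).
  by rewrite -!ent_deflate_off // heq.
move/(ent_inj t_perm (deflate_pos_range hx) (deflate_pos_range hy)).
by rewrite /deflate_pos; case: (ltnP x p); case: (ltnP y p); lia.
Qed.

Lemma segment_ent : segment t p k = map (ent t) (iota p k).
Proof. by have [hp hpk] := low_block_bounds; apply: segmentE; rewrite ?t_size; lia. Qed.

Lemma size_segment : size (segment t p k) = k.
Proof. by rewrite segment_ent size_map size_iota. Qed.

Lemma ent_segment x : 1 <= x <= k -> ent (segment t p k) x = ent t (x + p.-1).
Proof.
move=> hx; have [hp _] := low_block_bounds.
rewrite segment_ent /ent (nth_map 0) ?size_iota; last lia.
by rewrite nth_iota; [congr nth; lia | lia].
Qed.

Lemma is_perm_segment : is_perm k (segment t p k).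
Proof.
have [hp hpk] := low_block_bounds.
apply: is_perm_of_ent; first exact: size_segment.
  move=> x hx; rewrite ent_segment //.
  by have := ent_range t_perm (x := x + p.-1); have := low_block_below (x := x + p.-1); lia.
by move=> x y hx hy; rewrite !ent_segment // => /(ent_inj t_perm); lia.
Qed.

Lemma inflate_deflate : inflate pi (segment t p k) = t.
Proof.
have [hp hpk] := low_block_bounds.
have pi_size : size pi = m by rewrite size_deflate t_size.
have pi_1 : index 1 pi = p.-1.
  have <- : nth 0 pi p.-1 = 1 by rewrite -ent_deflate_p /ent.
  by rewrite index_uniq ?pi_size ?(is_perm_uniq is_perm_deflate); lia.
rewrite /inflate pi_1 size_segment.
have -> : [seq x + k.-1 | x <- take p.-1 pi] = take p.-1 t.
  apply: (@eq_from_nth _ 0) => [|i]; first by rewrite size_map !size_takel ?pi_size ?t_size; lia.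
  rewrite size_map size_takel ?pi_size => [hi|]; last lia.
  rewrite (nth_map 0) ?size_takel ?pi_size ?nth_take //; try lia.
  rewrite [nth 0 pi i]/(ent pi i.+1) ent_deflate_off; try lia.
  by rewrite /deflate_pos ifT //; lia.
have -> : [seq x + k.-1 | x <- drop p.-1.+1 pi] = drop k (drop p.-1 t).
  apply: (@eq_from_nth _ 0) => [|i]; first by rewrite size_map !size_drop pi_size t_size; lia.
  rewrite size_map size_drop pi_size => hi.
  rewrite (nth_map 0) ?size_drop ?pi_size // !nth_drop.
  rewrite [nth 0 pi _]/(ent pi (p.-1.+1 + i).+1) ent_deflate_off; try lia.
  by rewrite /deflate_pos ifF /ent; [congr nth; lia | apply/negbTE; lia].
by rewrite /segment !cat_take_drop.
Qed.

Lemma avoids_all_deflate : avoids_all t -> avoids_all pi.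
Proof.
case=> h3241 h1423 h4132 h2314 [h231 h132].
have [hp hpk] := low_block_bounds.
have pi_size : size pi = m by rewrite size_deflate t_size.
have pos i j : 1 <= i -> i + 2 <= j -> j <= m.-1 -> [/\ 1 <= deflate_pos p k i,
    deflate_pos p k i + 2 <= deflate_pos p k j & deflate_pos p k j <= (size t).-1].
  move=> hi hij hj; have := deflate_pos_ge p k i; have := deflate_pos_gap p k hij.
  by have := deflate_pos_lt (x := j); rewrite t_size; split; lia.
split; [move: h3241 | move: h1423 | move: h4132 | move: h2314 | split].
1-4: move=> hpat [i [j []]]; rewrite pi_size => hi hij hj;
  rewrite !ent_deflateS ?ent_deflate ?t_size; try lia; case=> *;
  apply: hpat; exists (deflate_pos p k i), (deflate_pos p k j);
  by have [*] := pos i j hi hij hj; split => //; split; lia.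
- case=> i []; rewrite pi_size => hi him.
  rewrite ent_deflate_last ?ent_deflateS ?ent_deflate ?t_size; try lia; move=> *.
  apply: h231; exists (deflate_pos p k i); rewrite t_size.
  have := deflate_pos_ge p k i; have := deflate_pos_succ p k i.
  by have := deflate_pos_lt (x := i.+1); split; lia.
- case=> j []; rewrite pi_size => hj hjm.
  rewrite ent_deflate_first ?ent_deflateS ?ent_deflate ?t_size; try lia; move=> *.
  apply: h132; exists (deflate_pos p k j); rewrite t_size.
  by have := deflate_pos_ge p k j; have := deflate_pos_lt (x := j); split; lia.
Qed.

Lemma avoids_all_segment : avoids_all t -> avoids_all (segment t p k).
Proof.
case=> h3241 h1423 h4132 h2314 [h231 h132].
have [hp hpk] := low_block_bounds.
have entS x : x < k -> ent (segment t p k) x.+1 = ent t (x + p.-1).+1.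
  by move=> hx; rewrite ent_segment; [congr ent; lia | lia].
split; [move: h3241 | move: h1423 | move: h4132 | move: h2314 | split].
1-4: move=> hpat [i [j []]]; rewrite size_segment => hi hij hj;
  rewrite !entS ?ent_segment; try lia; case=> *;
  by apply: hpat; exists (i + p.-1), (j + p.-1); rewrite t_size; do !split; lia.
- case=> i []; rewrite size_segment => hi hik.
  rewrite entS ?ent_segment; try lia; move=> h1 h2.
  have hin := low_block_below (x := (i + p.-1).+1) ltac:(lia).
  case: (ltnP (p + k) n.+1) => hpn.
    have hout := low_block_above (z := (k + p.-1).+1) ltac:(lia) ltac:(lia).
    by apply: h2314; exists (i + p.-1), (k + p.-1); rewrite t_size; do !split; lia.
  by apply: h231; exists (i + p.-1); rewrite t_size (_ : n = k + p.-1); do ?split; lia.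
- case=> j []; rewrite size_segment => hj hjk.
  rewrite (entS j) ?ent_segment ?add1n; try lia; move=> h1 h2.
  case: (ltnP 1 p) => hp1.
    have hout := low_block_above (z := p.-1) ltac:(lia) ltac:(lia).
    have hin := low_block_below (x := j + p.-1) ltac:(lia).
    by apply: h4132; exists p.-1, (j + p.-1); rewrite t_size; do !split; lia.
  move: h1 h2; rewrite (_ : p.-1 = 0) ?addn0; last lia.
  by move=> *; apply: h132; exists j; rewrite t_size; do ?split; lia.
Qed.

Lemma low_block_lift q l : low_block pi q l -> q <= p < q + l -> low_block t q (l + k.-1).
Proof.
case; rewrite size_deflate t_size => hq hql hv hpq; have [hp hpk] := low_block_bounds.
split; rewrite ?t_size; try lia.
move=> y hy; have := ent_range t_perm (x := y) ltac:(lia).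
suff : ent t y <= l + k.-1 by lia.
case: (ltnP y p) => hyp.
  have dp_y : deflate_pos p k y = y by rewrite /deflate_pos hyp.
  have := ent_deflate_off (x := y) ltac:(lia) ltac:(lia); rewrite dp_y.
  by have := hv y ltac:(lia); lia.
case: (ltnP y (p + k)) => hyk; first by have := low_block_below (x := y); lia.
have dp_y : deflate_pos p k (y - k.-1) = y.
  by rewrite /deflate_pos; case: (ltnP (y - k.-1) p); lia.
have := ent_deflate_off (x := y - k.-1) ltac:(lia) ltac:(lia); rewrite dp_y.
by have := hv (y - k.-1) ltac:(lia); lia.
Qed.

Lemma low_block_deflate q l : low_block t q l -> q <= p -> p + k <= q + l ->
  low_block pi q (l - k.-1).
Proof.
case; rewrite t_size => hq hql hv hqp hpl; have [hp hpk] := low_block_bounds.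
split; rewrite ?size_deflate ?t_size; try lia.
move=> x hx; have := ent_range is_perm_deflate (x := x) ltac:(lia).
case: (eqVneq x p) => [->|hxp]; first by rewrite ent_deflate_p; lia.
have := ent_deflate_off (x := x) ltac:(lia) hxp.
by have := hv (deflate_pos p k x); rewrite /deflate_pos; case: (ltnP x p); lia.
Qed.

End Deflate.

Section Inflate.
Variables (m k : nat) (pi sg : seq nat).
Hypotheses (pi_perm : is_perm m pi) (sg_perm : is_perm k sg).
Hypotheses (m_pos : 0 < m) (k_pos : 0 < k).
Local Notation r := (index 1 pi).
Local Notation t := (inflate pi sg).

Let pi_size : size pi = m := is_perm_size pi_perm.
Let sg_size : size sg = k := is_perm_size sg_perm.

Lemma index1_lt : r < m.
Proof. by rewrite -pi_size index_mem (perm_mem pi_perm) mem_iota; lia. Qed.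

Lemma ent_index1 : ent pi r.+1 = 1.
Proof. by rewrite /ent nth_index // (perm_mem pi_perm) mem_iota; lia. Qed.

Lemma inflateE :
  t = [seq x + k.-1 | x <- take r pi] ++ sg ++ [seq x + k.-1 | x <- drop r.+1 pi].
Proof. by rewrite /inflate sg_size. Qed.

Lemma size_inflate : size t = m + k.-1.
Proof.
have hr := index1_lt; rewrite inflateE !size_cat !size_map size_takel ?pi_size; last lia.
by rewrite size_drop pi_size sg_size; lia.
Qed.

Lemma ent_inflate_before x : 1 <= x <= r -> ent t x = ent pi x + k.-1.
Proof.
move=> hx; have hr := index1_lt.
rewrite inflateE /ent nth_cat size_map size_takel ?pi_size; last lia.
by rewrite ifT; [rewrite (nth_map 0) ?nth_take ?size_takel ?pi_size | ]; lia.
Qed.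

Lemma ent_inflate_block x : r < x <= r + k -> ent t x = ent sg (x - r).
Proof.
move=> hx; have hr := index1_lt.
rewrite inflateE /ent nth_cat size_map size_takel ?pi_size; last lia.
rewrite ifF; last by apply/negbTE; lia.
by rewrite nth_cat sg_size ifT; [congr nth | ]; lia.
Qed.

Lemma ent_inflate_after x : r + k < x <= m + k.-1 -> ent t x = ent pi (x - k.-1) + k.-1.
Proof.
move=> hx; have hr := index1_lt.
rewrite inflateE /ent nth_cat size_map size_takel ?pi_size; last lia.
rewrite ifF; last by apply/negbTE; lia.
rewrite nth_cat sg_size ifF; last by apply/negbTE; lia.
by rewrite (nth_map 0) ?size_drop ?pi_size ?nth_drop; [congr (nth _ _ _ + _) | ]; lia.
Qed.

Lemma inflate_low_block : low_block t r.+1 k.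
Proof.
have hr := index1_lt; split; rewrite ?size_inflate; try lia.
move=> x hx; rewrite ent_inflate_block; last lia.
by have := ent_range sg_perm (x := x - r); lia.
Qed.

Lemma deflate_inflate : deflate t r.+1 k = pi.
Proof.
have hr := index1_lt; have hr1 := ent_index1.
apply: (@eq_from_nth _ 0) => [|i]; first by rewrite size_deflate size_inflate pi_size; lia.
rewrite size_deflate size_inflate => hi.
rewrite -[nth 0 _ i]/(ent _ i.+1) -[nth 0 pi i]/(ent pi i.+1) ent_deflate ?size_inflate; last lia.
have pi_big : i.+1 != r.+1 -> 2 <= ent pi i.+1.
  move=> hir; have := ent_range pi_perm (x := i.+1) ltac:(lia).
  by have := ent_inj pi_perm (x := i.+1) (y := r.+1); rewrite hr1; lia.
rewrite /deflate_pos; case: (ltngtP i.+1 r.+1) => hir.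
- by rewrite ent_inflate_before; [have := pi_big; lia | lia].
- rewrite ent_inflate_after; last lia.
  by rewrite (_ : i.+1 + k.-1 - k.-1 = i.+1); [have := pi_big; lia | lia].
- rewrite hir hr1 ent_inflate_block; last lia.
  by have := ent_range sg_perm (x := r.+1 + k.-1 - r); lia.
Qed.

End Inflate.

Lemma exists_max (P : nat -> Prop) N k : P k -> (forall j, P j -> j <= N) ->
  exists2 m, P m & forall j, P j -> j <= m.
Proof.
elim: N k => [|N IH] k Pk ub; first by exists k => // j /ub; have := ub k Pk; lia.
case: (classic (P N.+1)) => [PN|nPN]; first by exists N.+1.
apply: (IH k) => // j Pj; have := ub j Pj; rewrite leq_eqVlt => /orP [/eqP hj|//].
by rewrite hj in Pj.
Qed.

Lemma exists_max_low_block n t : is_perm n t -> avoids_all t -> ~ simple t ->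
  exists p k, [/\ 2 <= k <= n.-1, low_block t p k &
    forall q l, l <= n.-1 -> low_block t q l -> l <= k].
Proof.
move=> hp hav hns; have hsize := is_perm_size hp.
have [i [j [[hij hj hlen] hcb]]] : exists i j,
    [/\ 1 <= i < j, j <= n & j - i + 1 <= n.-1] /\ consecutive_block t i j.
  apply: NNPP => hno; apply: hns => i j hi hij hj h2 hlen hcb; apply: hno.
  by exists i, j; split; [rewrite -hsize; split; lia |].
have [q0 [l0 [hl0 hlow0]]] := exists_low_block hp hav hij hj hlen hcb.
have [k [hk [p hlow]] hmax] :=
  exists_max (P := fun l => 2 <= l <= n.-1 /\ exists q, low_block t q l) (N := n)
    (conj hl0 (ex_intro _ q0 hlow0)) (fun l hl => ltac:(case: hl; lia)).
exists p, k; split => // q l hl hql.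
by case: (ltnP l 2) => [|h2l]; [lia | apply: hmax; split; [lia | exists q]].
Qed.

Lemma deflate_simple n t p k : is_perm n t -> avoids_all t -> low_block t p k -> 0 < k ->
  (forall q l, l <= n.-1 -> low_block t q l -> l <= k) -> simple (deflate t p k).
Proof.
move=> hp hav hlow hk hmax i j hi hij hj h2 hlen hcb.
have pi_perm := is_perm_deflate hp hlow hk.
rewrite size_deflate (is_perm_size hp) in hj hlen.
have [q [l [hl hql]]] := exists_low_block pi_perm (avoids_all_deflate hp hlow hk hav)
  (i := i) (j := j) ltac:(lia) hj hlen hcb.
have [hp1 hpk] := low_block_bounds hp hlow.
have hpq : q <= p < q + l.
  by apply: (low_block_position pi_perm hql); rewrite ?(ent_deflate_p hp hlow hk); lia.
by have := hmax _ _ _ (low_block_lift hp hlow hk hql hpq); lia.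
Qed.

Lemma simple_inflation_unique n t p k m pi sg :
  is_perm n t -> low_block t p k -> k <= n.-1 ->
  (forall q l, l <= n.-1 -> low_block t q l -> l <= k) ->
  is_perm m pi -> simple pi -> 2 <= m -> is_perm (n - m + 1) sg ->
  t = inflate pi sg -> pi = deflate t p k.
Proof.
move=> hp hlow hkn hmax hpi hs hm hsg ht.
have [hp1 hpk] := low_block_bounds hp hlow.
have hn : n = m + (n - m + 1).-1.
  by rewrite -(is_perm_size hp) ht (size_inflate hpi hsg); lia.
move: hsg ht; set k' := n - m + 1 => hsg ht.
have hk' : 0 < k' by lia.
have hlow' : low_block t (index 1 pi).+1 k'.
  by rewrite ht; apply: (inflate_low_block hpi hsg); lia.
have hk'k : k' <= k by apply: hmax hlow'; lia.
have [hr1 hrk'] := low_block_bounds hp hlow'.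
have hin : p <= (index 1 pi).+1 /\ index 1 pi + k' < p + k.
  have := low_block_below hp hlow' hk' (x := (index 1 pi).+1).
  have := low_block_below hp hlow' hk' (x := index 1 pi + k').
  have := low_block_position hp hlow (z := (index 1 pi).+1).
  have := low_block_position hp hlow (z := index 1 pi + k').
  lia.
have hkk : k' = k.
  case: (ltnP k' k) => hlt; last lia; exfalso.
  have pi_low : low_block pi p (k - k'.-1).
    rewrite -(deflate_inflate hpi hsg) -?ht; try lia.
    by apply: (low_block_deflate hp hlow' hk' hlow); lia.
  have [_ hpm _] := pi_low; rewrite (is_perm_size hpi) in hpm.
  apply: (hs p (p + (k - k'.-1) - 1)); rewrite ?(is_perm_size hpi); try lia.
  by apply: (low_block_consecutive hpi _ pi_low); lia.
have hpr : (index 1 pi).+1 = p by lia.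
by rewrite ht -hpr -hkk (deflate_inflate hpi hsg) //; lia.
Qed.

Theorem mainTheorem14 (n : nat) (tau : seq nat) :
  inA n tau -> ~ simple tau ->
  exists m pi sigma,
    [/\ 2 <= m <= n.-1, inA m pi, simple pi, inA (n - m + 1) sigma &
        tau = inflate pi sigma] /\
    (forall m' pi' sigma', 2 <= m' <= n.-1 -> inA m' pi' -> simple pi' ->
       inA (n - m' + 1) sigma' -> tau = inflate pi' sigma' -> pi' = pi).
Proof.
move=> [hp hav] hns.
have [p [k [hk hlow hmax]]] := exists_max_low_block hp hav hns.
have hk0 : 0 < k by lia.
exists (n - k.-1), (deflate tau p k), (segment tau p k); split.
  rewrite (_ : n - (n - k.-1) + 1 = k); last lia.
  split; [lia | split | | split | ].
  - exact: is_perm_deflate hp hlow hk0.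
  - exact: avoids_all_deflate hp hlow hk0 hav.
  - exact: deflate_simple hp hav hlow hk0 hmax.
  - exact: is_perm_segment hp hlow hk0.
  - exact: avoids_all_segment hp hlow hk0 hav.
  - by rewrite (inflate_deflate hp hlow hk0).
move=> m' pi' sigma' hm' [hpi' _] hs' [hsigma' _] heq.
by apply: (simple_inflation_unique hp hlow _ hmax hpi' hs' _ hsigma' heq); lia.
Qed.
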